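(* Assume the environment is elliptic. Let $\mathfrak{m}_n\in\mathbb{R}^m$ (column vectors) satisfy $\mathfrak{m}_n=P_n\mathfrak{m}_{n+1}+R_n\mathfrak{m}_n+Q_n\mathfrak{m}_{n-1}$ for all $n$, and let $\rho_n$ (row vectors) satisfy $\rho_n=\rho_{n-1}P_{n-1}+\rho_nR_n+\rho_{n+1}Q_{n+1}$ together with $\rho_n=\rho_{n+1}\alpha_n$ and $\rho_{n+1}=\rho_n\alpha^-_{n+1}$ for all $n$. Then there exists a constant $c$ such that for all $n$ $$\rho_{n+1}Q_{n+1}(\mathfrak{m}_n-\zeta_n\mathfrak{m}_{n+1})=c,\qquad\rho_nP_n(\mathfrak{m}_{n+1}-\zeta^-_{n+1}\mathfrak{m}_n)=-c.$$
   Context: $m\ge1$; an environment is $(P_n,Q_n,R_n)_{n\in\mathbb{Z}}$, nonnegative $m\times m$ matrices with $(P_n+Q_n+R_n)\mathbf{1}=\mathbf{1}$. Norm $\|x\|=\max|x_i|$ with induced matrix norm. Ellipticity: there are $\bar\varepsilon>0$, $k_0$ with $\|R_n^{k_0}\|\le1-\bar\varepsilon$, $((I-R_n)^{-1}P_n)(i,j)\ge\bar\varepsilon$, $((I-R_n)^{-1}Q_n)(i,j)\ge\bar\varepsilon$ for all $n,i,j$. $\zeta_n=\lim_{a\to-\infty}\psi_{n,a}$, where $\psi_{a,a}$ is any stochastic matrix and $\psi_{n,a}=(I-R_n-Q_n\psi_{n-1,a})^{-1}P_n$ for $n>a$ (the limit exists, is independent of choices, and satisfies $\zeta_n=(I-R_n-Q_n\zeta_{n-1})^{-1}P_n$);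 symmetrically $\zeta^-_n$ is the stochastic sequence with $\zeta^-_n=(I-R_n-P_n\zeta^-_{n+1})^{-1}Q_n$ obtained as the analogous limit from $+\infty$. $\alpha_n=Q_{n+1}(I-R_n-Q_n\zeta_{n-1})^{-1}$ and $\alpha^-_n=P_{n-1}(I-R_n-P_n\zeta^-_{n+1})^{-1}$. *)

From HB Require Import structures.
From mathcomp Require Import all_boot all_order all_algebra.
From mathcomp Require Import all_classical all_reals topology normedtype sequences.
Set Implicit Arguments. Unset Strict Implicit. Unset Printing Implicit Defensive.
Import Order.TTheory GRing.Theory Num.Theory numFieldNormedType.Exports.
Local Open Scope classical_set_scope.
Local Open Scope ring_scope.

Section Env.
Variables (R : realType) (m : nat).
Notation M := 'M[R]_m.

(* induced matrix norm of the max-norm: maximal absolute row sum *)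
Definition mxnorm_inf (A : M) : R := \big[Num.max/0]_(i < m) \sum_(j < m) `|A i j|.

Definition mx_nonneg (A : M) : Prop := forall i j, 0 <= A i j.

Definition ones : 'cV[R]_m := const_mx 1.

Definition stochastic (A : M) : Prop := mx_nonneg A /\ A *m ones = ones.

Definition environment (P Q Rm : int -> M) : Prop :=
  forall n, [/\ mx_nonneg (P n), mx_nonneg (Q n), mx_nonneg (Rm n) &
                (P n + Q n + Rm n) *m ones = ones].

Definition elliptic (P Q Rm : int -> M) : Prop :=
  exists (eps : R) (k0 : nat), 0 < eps /\ forall n,
    [/\ mxnorm_inf (Rm n ^+ k0) <= 1 - eps,
        forall i j, eps <= (invmx (1%:M - Rm n) *m P n) i j &
        forall i j, eps <= (invmx (1%:M - Rm n) *m Q n) i j].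

(* psi S a k = psi_{a+k, a} with psi_{a,a} = S a *)
Fixpoint psi (P Q Rm : int -> M) (S : int -> M) (a : int) (k : nat) : M :=
  match k with
  | O => S a
  | k'.+1 => invmx (1%:M - Rm (a + k%:Z) - Q (a + k%:Z) *m psi P Q Rm S a k')
             *m P (a + k%:Z)
  end.

(* psim S a k = psi^-_{a-k, a} with psi^-_{a,a} = S a *)
Fixpoint psim (P Q Rm : int -> M) (S : int -> M) (a : int) (k : nat) : M :=
  match k with
  | O => S a
  | k'.+1 => invmx (1%:M - Rm (a - k%:Z) - P (a - k%:Z) *m psim P Q Rm S a k')
             *m Q (a - k%:Z)
  end.

(* zeta_n = lim_{a -> -oo} psi_{n,a}, for every choice of stochastic psi_{a,a} *)
Definition is_zeta (P Q Rm : int -> M) (zeta : int -> M) : Prop :=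
  forall S : int -> M, (forall a, stochastic (S a)) ->
  forall n i j, (fun k : nat => psi P Q Rm S (n - k%:Z) k i j) @ \oo --> zeta n i j.

(* zeta^-_n = lim_{a -> +oo} psi^-_{n,a} *)
Definition is_zetam (P Q Rm : int -> M) (zetam : int -> M) : Prop :=
  forall S : int -> M, (forall a, stochastic (S a)) ->
  forall n i j, (fun k : nat => psim P Q Rm S (n + k%:Z) k i j) @ \oo --> zetam n i j.

Definition alpha (P Q Rm zeta : int -> M) (n : int) : M :=
  Q (n + 1) *m invmx (1%:M - Rm n - Q n *m zeta (n - 1)).

Definition alpham (P Q Rm zetam : int -> M) (n : int) : M :=
  P (n - 1) *m invmx (1%:M - Rm n - P n *m zetam (n + 1)).

End Env.

From HB Require Import structures.
From mathcomp Require Import all_boot all_order all_algebra.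
From mathcomp Require Import all_classical all_reals topology normedtype sequences.
From mathcomp Require Import lra zify.
Import Order.TTheory GRing.Theory Num.Theory numFieldNormedType.Exports.
Set Implicit Arguments.
Unset Strict Implicit.
Local Open Scope classical_set_scope.
Local Open Scope ring_scope.

(* Write G = (I - R_n)^-1 Q_n and H = (I - R_n)^-1 P_n: by ellipticity their entries are
   at least eps and their row sums add up to 1.  Hence, for psi nonexpansive in the max-norm,
   I - R_n - Q_n psi = (I - R_n)(I - G psi) is invertible and (I - R_n - Q_n psi)^-1 P_n is
   again nonexpansive.  So zeta_n, the limit of such iterates started from I, is nonexpansive,
   alpha_n really inverts I - R_n - Q_n zeta_(n-1), and passing to the limit in the recursion
   gives (I - R_n - Q_n zeta_(n-1)) zeta_n = P_n.  Mirroring n -> -n and exchanging P and Q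
   gives the same for zeta^-.  The relation rho_(n+1) Q_(n+1) = rho_n (I - R_n - Q_n zeta_(n-1))
   and the harmonic equation for m then show that the first flux does not depend on n, and
   rho_(n+1) Q_(n+1) zeta_n = rho_n P_n, rho_n P_n zeta^-_(n+1) = rho_(n+1) Q_(n+1) show that
   the two fluxes add up to 0. *)

Lemma unitmx_ker0 (F : fieldType) n (A : 'M[F]_n) :
  (forall x : 'cV_n, A *m x = 0 -> x = 0) -> A \in unitmx.
Proof.
move=> ker0; rewrite -unitmx_tr unitmxE unitfE; apply/negP => /det0P[v nz_v vA].
have /ker0/(congr1 trmx) : A *m v^T = 0 by rewrite -[A]trmxK -trmx_mul vA trmx0.
by rewrite trmxK trmx0 => v0; rewrite v0 eqxx in nz_v.
Qed.

Section MaxNorm.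
Variables (R : realType) (m : nat).
Implicit Types (A : 'M[R]_m) (x : 'cV[R]_m).

Definition vnorm x : R := \big[Num.max/0]_i `|x i 0|.

Lemma vnorm_ge0 x : 0 <= vnorm x.
Proof. exact: bigmax_ge_id. Qed.

Lemma ler_vnorm x i : `|x i 0| <= vnorm x.
Proof. exact: le_bigmax. Qed.

Lemma vnorm_le x b : 0 <= b -> (forall i, `|x i 0| <= b) -> vnorm x <= b.
Proof. by move=> b_ge0 le_b; apply: bigmax_le. Qed.

Lemma vnorm_contraction_eq0 x c : c < 1 -> vnorm x <= c * vnorm x -> x = 0.
Proof.
move=> c_lt1 le_cx; have := vnorm_ge0 x => x_ge0.
have x_le0 : vnorm x <= 0 by nra.
apply/matrixP => i j; rewrite (ord1 j) mxE; apply/eqP.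
by rewrite -normr_le0 (le_trans (ler_vnorm x i)).
Qed.

Lemma ler_norm_mulmx A x i : `|(A *m x) i 0| <= (\sum_j `|A i j|) * vnorm x.
Proof.
rewrite mxE mulr_suml; apply: (le_trans (ler_norm_sum _ _ _)).
by apply: ler_sum => j _; rewrite normrM ler_wpM2l // ler_vnorm.
Qed.

Lemma vnorm_mulmx_le A x : vnorm (A *m x) <= mxnorm_inf A * vnorm x.
Proof.
have normA_ge0 : 0 <= mxnorm_inf A by exact: bigmax_ge_id.
apply: vnorm_le => [|i]; first by rewrite mulr_ge0 ?vnorm_ge0.
apply: (le_trans (ler_norm_mulmx A x i)); rewrite ler_wpM2r ?vnorm_ge0 //.
exact: le_bigmax.
Qed.

Definition nonexpansive A := forall x, vnorm (A *m x) <= vnorm x.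

Lemma nonexpansive1 : nonexpansive 1%:M.
Proof. by move=> x; rewrite mul1mx. Qed.

End MaxNorm.

Section Site.
Variables (R : realType) (m : nat) (P Q Rr : 'M[R]_m) (eps : R) (k0 : nat).
Hypotheses (eps_gt0 : 0 < eps) (normRk0 : mxnorm_inf (Rr ^+ k0) <= 1 - eps)
  (P_ge : forall i j, eps <= (invmx (1%:M - Rr) *m P) i j)
  (Q_ge : forall i j, eps <= (invmx (1%:M - Rr) *m Q) i j)
  (rowsum1 : (P + Q + Rr) *m ones R m = ones R m).

Local Notation G := (invmx (1%:M - Rr) *m Q).
Local Notation H := (invmx (1%:M - Rr) *m P).

Lemma eps_le1 : eps <= 1.
Proof.
have : 0 <= mxnorm_inf (Rr ^+ k0) by exact: bigmax_ge_id.
by move: normRk0; lra.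
Qed.

Lemma unitmx_1BR : 1%:M - Rr \in unitmx.
Proof.
apply: unitmx_ker0 => x; rewrite mulmxBl mul1mx => /eqP; rewrite subr_eq0 => /eqP x_fix.
have xRk k : x = Rr ^+ k *m x.
  by elim: k => [|k IHk]; rewrite ?expr0 ?mul1mx // exprS -mulmxE -mulmxA -IHk.
apply: (@vnorm_contraction_eq0 _ _ _ (1 - eps)); first by rewrite gtrBl.
rewrite [in X in X <= _](xRk k0); apply: (le_trans (vnorm_mulmx_le _ _)).
by rewrite ler_wpM2r ?vnorm_ge0.
Qed.

Lemma rowsum_GH i : \sum_j G i j + \sum_j H i j = 1.
Proof.
have GH1 : (G + H) *m ones R m = ones R m.
  have QP1 : (Q + P) *m ones R m = (1%:M - Rr) *m ones R m.
    by rewrite mulmxBl mul1mx -{2}rowsum1 !mulmxDl addrK addrC.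
  by rewrite -mulmxDr -mulmxA QP1 mulKmx // unitmx_1BR.
have := congr1 (fun v : 'cV[R]_m => v i 0) GH1; rewrite /ones !mxE => GH1i.
by rewrite -[RHS]GH1i -big_split; apply: eq_bigr => j _; rewrite !mxE mulr1.
Qed.

Lemma sum_normG i : \sum_j `|G i j| = \sum_j G i j.
Proof. by apply: eq_bigr => j _; rewrite ger0_norm // (le_trans (ltW eps_gt0)). Qed.

Lemma sum_normH i : \sum_j `|H i j| = \sum_j H i j.
Proof. by apply: eq_bigr => j _; rewrite ger0_norm // (le_trans (ltW eps_gt0)). Qed.

Lemma rowsumG_bounds i : 0 <= \sum_j G i j <= 1 - eps.
Proof.
have G_ge0 : 0 <= \sum_j G i j.
  by apply: sumr_ge0 => j _; rewrite (le_trans (ltW eps_gt0)).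
have H_ge : eps <= \sum_j H i j.
  rewrite (bigD1 i) //=; apply: (le_trans (P_ge i i)); rewrite lerDl.
  by apply: sumr_ge0 => j _; rewrite (le_trans (ltW eps_gt0)).
by have := rowsum_GH i; rewrite G_ge0 /=; move: H_ge; lra.
Qed.

Lemma mulmx_1BR_1BG (psi : 'M[R]_m) :
  (1%:M - Rr) *m (1%:M - G *m psi) = 1%:M - Rr - Q *m psi.
Proof. by rewrite mulmxBr mulmx1 mulmxA mulKVmx // unitmx_1BR. Qed.

Lemma unitmx_site (psi : 'M[R]_m) :
  nonexpansive psi -> 1%:M - Rr - Q *m psi \in unitmx.
Proof.
move=> psi_ne; rewrite -mulmx_1BR_1BG unitmx_mul unitmx_1BR /=.
apply: unitmx_ker0 => x; rewrite mulmxBl mul1mx -[G *m psi *m x]mulmxA => /eqP.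
rewrite subr_eq0 => /eqP x_fix.
apply: (@vnorm_contraction_eq0 _ _ _ (1 - eps)); first by rewrite gtrBl.
apply: vnorm_le => [|i]; first by rewrite mulr_ge0 ?vnorm_ge0 // subr_ge0 eps_le1.
rewrite {1}x_fix; apply: (le_trans (ler_norm_mulmx _ _ _)).
have /andP[G_ge0 G_le] := rowsumG_bounds i.
by rewrite sum_normG ler_pM ?vnorm_ge0.
Qed.

Lemma nonexpansive_site (psi : 'M[R]_m) :
  nonexpansive psi -> nonexpansive (invmx (1%:M - Rr - Q *m psi) *m P).
Proof.
move=> psi_ne x.
have Ay : (1%:M - Rr - Q *m psi) *m (invmx (1%:M - Rr - Q *m psi) *m P *m x) = P *m x.
  by rewrite mulmxA mulKVmx ?unitmx_site.
move: (invmx _ *m P *m x) Ay => y Ay.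
have y_eq : y = H *m x + G *m (psi *m y).
  move/(congr1 (mulmx (invmx (1%:M - Rr)))): Ay.
  rewrite -mulmx_1BR_1BG -mulmxA mulKmx ?unitmx_1BR // mulmxBl mul1mx mulmxA.
  by move=> /eqP; rewrite subr_eq => /eqP {1}->; rewrite mulmxA.
have y_le i : `|y i 0| <= (\sum_j H i j) * vnorm x + (\sum_j G i j) * vnorm y.
  rewrite {1}y_eq mxE; apply: (le_trans (ler_normD _ _)); apply: lerD.
    by rewrite -sum_normH ler_norm_mulmx.
  rewrite -sum_normG; apply: (le_trans (ler_norm_mulmx _ _ _)).
  by rewrite ler_wpM2l ?sumr_ge0 // => j _; rewrite normr_ge0.
(* If |x| < |y|, then |y_i| <= h_i |x| + g_i |y| <= |x| + (1 - eps) (|y| - |x|) < |y|. *)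
have := vnorm_ge0 x; have := eps_gt0; have := eps_le1.
case: (lerP (vnorm y) (vnorm x)) => // x_lt_y *.
suff : vnorm y <= vnorm x + (1 - eps) * (vnorm y - vnorm x) by nra.
apply: vnorm_le => [|i]; first by nra.
by have := y_le i; have := rowsum_GH i; have /andP[] := rowsumG_bounds i; nra.
Qed.

End Site.

Section EntrywiseLimits.
Variable R : realType.

Definition mxcvg p q (u : nat -> 'M[R]_(p, q)) (L : 'M[R]_(p, q)) :=
  forall i j, (fun k => u k i j) @ \oo --> L i j.

Lemma mxcvg_cst p q (A : 'M[R]_(p, q)) : mxcvg (fun=> A) A.
Proof. by move=> i j; exact: cvg_cst. Qed.
Arguments mxcvg_cst {p q} A.

Lemma mxcvgB p q (u v : nat -> 'M[R]_(p, q)) U V :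
  mxcvg u U -> mxcvg v V -> mxcvg (fun k => u k - v k) (U - V).
Proof. by move=> uU vV i j; rewrite !mxE; under eq_cvg do rewrite !mxE; exact: cvgB. Qed.

Lemma mxcvgM p q r (u : nat -> 'M[R]_(p, q)) (v : nat -> 'M[R]_(q, r)) U V :
  mxcvg u U -> mxcvg v V -> mxcvg (fun k => u k *m v k) (U *m V).
Proof.
move=> uU vV i j; rewrite mxE; under eq_cvg do rewrite mxE.
apply: (@cvg_big R^o _ +%R 0 xpredT add_continuous) => // l _.
exact: cvgM.
Qed.

Lemma mxcvg_unique p q (u : nat -> 'M[R]_(p, q)) U V : mxcvg u U -> mxcvg u V -> U = V.
Proof.
move=> uU uV; apply/matrixP => i j.
exact: (@cvg_unique R^o _ _ _ _ _ (uU i j) (uV i j)).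
Qed.

Lemma mxcvg_eq_recursion m (A B C : 'M[R]_m) (u v : nat -> 'M[R]_m) U V :
  (forall k, (A - B *m u k) *m v k = C) -> mxcvg u U -> mxcvg v V ->
  (A - B *m U) *m V = C.
Proof.
move=> rec uU vV.
have := mxcvgM (mxcvgB (mxcvg_cst A) (mxcvgM (mxcvg_cst B) uU)) vV.
by rewrite (funext rec) => /mxcvg_unique; apply; exact: mxcvg_cst.
Qed.

Lemma nonexpansive_mxcvg m (u : nat -> 'M[R]_m) U :
  (forall k, nonexpansive (u k)) -> mxcvg u U -> nonexpansive U.
Proof.
move=> u_ne uU x; apply: vnorm_le => [|i]; first exact: vnorm_ge0.
have /(_ i 0)/cvg_norm ux := mxcvgM uU (mxcvg_cst x).
apply: (ler_cvg_to ux (cvg_cst _)); near=> k.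
exact: le_trans (ler_vnorm _ i) (u_ne k x).
Unshelve. all: by end_near.
Qed.

End EntrywiseLimits.

Lemma stochastic1 (R : realType) m : stochastic (1%:M : 'M[R]_m).
Proof. by split=> [i j|]; rewrite ?mul1mx // mxE ler0n. Qed.

Section Zeta.
Variables (R : realType) (m : nat) (P Q Rm zeta : int -> 'M[R]_m).
Hypotheses (env : environment P Q Rm) (ell : elliptic P Q Rm)
  (zeta_lim : is_zeta P Q Rm zeta).

Lemma unitmx_elliptic n (psi : 'M[R]_m) :
  nonexpansive psi -> 1%:M - Rm n - Q n *m psi \in unitmx.
Proof.
move=> psi_ne; have [eps [k0 [eps_gt0 /(_ n)[normRk0 P_ge Q_ge]]]] := ell.
have [_ _ _ rowsum1] := env n.
exact: (unitmx_site eps_gt0 normRk0 P_ge Q_ge rowsum1 psi_ne).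
Qed.

Lemma nonexpansive_elliptic n (psi : 'M[R]_m) :
  nonexpansive psi -> nonexpansive (invmx (1%:M - Rm n - Q n *m psi) *m P n).
Proof.
move=> psi_ne; have [eps [k0 [eps_gt0 /(_ n)[normRk0 P_ge Q_ge]]]] := ell.
have [_ _ _ rowsum1] := env n.
exact: (nonexpansive_site eps_gt0 normRk0 P_ge Q_ge rowsum1 psi_ne).
Qed.

Lemma nonexpansive_psi S a k :
  (forall a, nonexpansive (S a)) -> nonexpansive (psi P Q Rm S a k).
Proof. by move=> S_ne; elim: k => [|k IHk] /=; [exact: S_ne | exact: nonexpansive_elliptic]. Qed.

Let psi1 a k := psi P Q Rm (fun=> 1%:M) a k.

Lemma nonexpansive_zeta n : nonexpansive (zeta n).
Proof.
apply: (@nonexpansive_mxcvg _ _ (fun k => psi1 (n - k%:Z) k)).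
  by move=> k; apply: nonexpansive_psi => a; exact: nonexpansive1.
exact: zeta_lim (fun=> stochastic1 R m) n.
Qed.

Lemma unitmx_zeta n : 1%:M - Rm n - Q n *m zeta (n - 1) \in unitmx.
Proof. exact/unitmx_elliptic/nonexpansive_zeta. Qed.

Lemma zeta_recursion n : (1%:M - Rm n - Q n *m zeta (n - 1)) *m zeta n = P n.
Proof.
have lim1 := zeta_lim (fun=> stochastic1 R m).
apply: (@mxcvg_eq_recursion _ _ _ _ _ (fun k => psi1 (n - k.+1%:Z) k)
                                      (fun k => psi1 (n - k.+1%:Z) k.+1)).
- move=> k; rewrite /psi1 /= subrK mulKVmx // unitmx_elliptic //.
  by apply: nonexpansive_psi => a; exact: nonexpansive1.
- suff -> : (fun k => psi1 (n - k.+1%:Z) k) = (fun k : nat => psi1 (n - 1 - k%:Z) k).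
    exact: lim1.
  by apply: funext => k; congr psi1; lia.
- by move=> i j; have := lim1 n i j; rewrite -cvg_shiftS.
Qed.

End Zeta.

Definition mirror T (f : int -> T) : int -> T := fun n => f (- n).

Section Mirror.
Variables (R : realType) (m : nat) (P Q Rm : int -> 'M[R]_m).

Lemma environment_mirror :
  environment P Q Rm -> environment (mirror Q) (mirror P) (mirror Rm).
Proof.
by move=> env n; have [P_ge0 Q_ge0 R_ge0 rowsum1] := env (- n); split; rewrite // [_ + P _]addrC.
Qed.

Lemma elliptic_mirror :
  elliptic P Q Rm -> elliptic (mirror Q) (mirror P) (mirror Rm).
Proof.
move=> [eps [k0 [eps_gt0 ell]]]; exists eps, k0; split=> // n.
by have [normRk0 P_ge Q_ge] := ell (- n); split.
Qed.

Lemma psim_mirror S a k :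
  psim P Q Rm S a k = psi (mirror Q) (mirror P) (mirror Rm) (mirror S) (- a) k.
Proof.
by elim: k => [|k IHk] /=; rewrite /mirror ?opprK // IHk opprD opprK.
Qed.

Lemma is_zetam_mirror zetam :
  is_zetam P Q Rm zetam -> is_zeta (mirror Q) (mirror P) (mirror Rm) (mirror zetam).
Proof.
move=> zetam_lim S S_st n i j.
have := zetam_lim (mirror S) (fun a => S_st (- a)) (- n) i j.
suff -> : (fun k : nat => psim P Q Rm (mirror S) (- n + k%:Z) k i j)
        = (fun k : nat => psi (mirror Q) (mirror P) (mirror Rm) S (n - k%:Z) k i j) by [].
apply: funext => k; rewrite psim_mirror opprD opprK.
by congr (psi _ _ _ _ _ _ i j); apply: funext => a; rewrite /mirror opprK.
Qed.

End Mirror.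

Section ZetaMinus.
Variables (R : realType) (m : nat) (P Q Rm zetam : int -> 'M[R]_m).
Hypotheses (env : environment P Q Rm) (ell : elliptic P Q Rm)
  (zetam_lim : is_zetam P Q Rm zetam).

Let env' := environment_mirror env.
Let ell' := elliptic_mirror ell.
Let zetam_lim' := is_zetam_mirror zetam_lim.

Lemma unitmx_zetam n : 1%:M - Rm n - P n *m zetam (n + 1) \in unitmx.
Proof.
have := unitmx_zeta env' ell' zetam_lim' (- n).
by rewrite /mirror opprK opprB opprK [1 + n]addrC.
Qed.

Lemma zetam_recursion n : (1%:M - Rm n - P n *m zetam (n + 1)) *m zetam n = Q n.
Proof.
have := zeta_recursion env' ell' zetam_lim' (- n).
by rewrite /mirror opprK opprB opprK [1 + n]addrC.
Qed.

End ZetaMinus.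

Lemma shift_invariant_const T (f : int -> T) :
  (forall n, f (n + 1) = f n) -> forall n, f n = f 0.
Proof.
move=> f_succ; elim/int_rect => [//|k IHk|k IHk].
  by rewrite -IHk -[RHS]f_succ; congr f; lia.
by rewrite -IHk -(f_succ (- k.+1%:Z)); congr f; lia.
Qed.

Section Flux.
Variables (R : pzRingType) (m : nat) (P Q Rm zeta zetam : int -> 'M[R]_m).
Variables (mm : int -> 'cV[R]_m) (rho : int -> 'rV[R]_m).
Hypotheses
  (zeta_rec : forall n, (1%:M - Rm n - Q n *m zeta (n - 1)) *m zeta n = P n)
  (zetam_rec : forall n, (1%:M - Rm n - P n *m zetam (n + 1)) *m zetam n = Q n)
  (mm_harmonic : forall n, mm n = P n *m mm (n + 1) + Rm n *m mm n + Q n *m mm (n - 1))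
  (rho_zeta : forall n,
     rho n *m (1%:M - Rm n - Q n *m zeta (n - 1)) = rho (n + 1) *m Q (n + 1))
  (rho_zetam : forall n,
     rho (n + 1) *m (1%:M - Rm (n + 1) - P (n + 1) *m zetam (n + 1 + 1)) = rho n *m P n).

Definition flux n := rho (n + 1) *m Q (n + 1) *m (mm n - zeta n *m mm (n + 1)).

Definition flux_minus n := rho n *m P n *m (mm (n + 1) - zetam (n + 1) *m mm n).

Lemma fluxE n : flux n = rho n *m Q n *m (mm (n - 1) - zeta (n - 1) *m mm n).
Proof.
rewrite /flux -rho_zeta -!mulmxA; congr (_ *m _).
rewrite mulmxBr mulmxA zeta_rec !mulmxBl mul1mx {1}(mm_harmonic n) mulmxBr mulmxA.
set a := P n *m _; set b := Rm n *m _; set c := Q n *m _.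
by rewrite [a + b + c]addrAC addrK addrAC [a + c]addrC addrK.
Qed.

Lemma flux_succ n : flux (n + 1) = flux n.
Proof. by rewrite fluxE addrK. Qed.

Lemma flux_add_minus n : flux n + flux_minus n = 0.
Proof.
have rhoQ_zeta : rho (n + 1) *m Q (n + 1) *m zeta n = rho n *m P n.
  by rewrite -rho_zeta -mulmxA zeta_rec.
have rhoP_zetam : rho n *m P n *m zetam (n + 1) = rho (n + 1) *m Q (n + 1).
  by rewrite -rho_zetam -mulmxA zetam_rec.
by rewrite /flux /flux_minus !mulmxBr !mulmxA rhoQ_zeta rhoP_zetam addrA subrK subrr.
Qed.

Lemma flux_conservation :
  exists c : R, forall n, flux n = c%:M /\ flux_minus n = (- c)%:M.
Proof.
exists (flux 0 0 0) => n; have flux_n := shift_invariant_const flux_succ n.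
have flux_minus_n : flux_minus n = - flux n.
  by apply/eqP; rewrite -addr_eq0 addrC flux_add_minus.
by rewrite flux_minus_n flux_n raddfN /= -mx11_scalar.
Qed.

End Flux.

Theorem lemma4p1 (R : realType) (m : nat) (hm : (0 < m)%N)
  (P Q Rm : int -> 'M[R]_m) (zeta zetam : int -> 'M[R]_m)
  (mm : int -> 'cV[R]_m) (rho : int -> 'rV[R]_m) :
  environment P Q Rm ->
  elliptic P Q Rm ->
  is_zeta P Q Rm zeta ->
  is_zetam P Q Rm zetam ->
  (forall n, mm n = P n *m mm (n + 1) + Rm n *m mm n + Q n *m mm (n - 1)) ->
  (forall n, rho n = rho (n - 1) *m P (n - 1) + rho n *m Rm n
                     + rho (n + 1) *m Q (n + 1)) ->
  (forall n, rho n = rho (n + 1) *m alpha P Q Rm zeta n) ->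
  (forall n, rho (n + 1) = rho n *m alpham P Q Rm zetam (n + 1)) ->
  exists c : R, forall n : int,
    rho (n + 1) *m Q (n + 1) *m (mm n - zeta n *m mm (n + 1)) = c%:M /\
    rho n *m P n *m (mm (n + 1) - zetam (n + 1) *m mm n) = (- c)%:M.
Proof.
move=> env ell zeta_lim zetam_lim mm_harmonic _ rho_alpha rho_alpham.
have rho_zeta n :
    rho n *m (1%:M - Rm n - Q n *m zeta (n - 1)) = rho (n + 1) *m Q (n + 1).
  by rewrite {1}rho_alpha /alpha mulmxA mulmxKV ?(unitmx_zeta env ell zeta_lim).
have rho_zetam n : rho (n + 1) *m (1%:M - Rm (n + 1) - P (n + 1) *m zetam (n + 1 + 1))
                   = rho n *m P n.
  by rewrite {1}rho_alpham /alpham addrK mulmxA mulmxKV ?(unitmx_zetam env ell zetam_lim).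
exact: (flux_conservation (zeta_recursion env ell zeta_lim)
          (zetam_recursion env ell zetam_lim) mm_harmonic rho_zeta rho_zetam).
Qed.
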